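(* Let $Y\subset\mathbb C^n$ be a $k$-dimensional subspace and $a\in(\mathbb C^\times)^n$, and assume that for every $j$, $Y\not\subset\{q_j=0\}$ and $Y^\perp\not\subset\{p_j=0\}$. Let $I\subset\{1,\dots,n\}$ be a $k$-element subset with complement $\bar I$ such that the functions $q_I=\{q_i:i\in I\}$ form a coordinate system on $Y$. Then the functions $q_I$ and $p_{\bar I}=\{p_j:j\in\bar I\}$ form a coordinate system on $L_{Y,a}$.
   Context: $\mathbb C^n$ has coordinates $q_1,\dots,q_n$, the dual space $(\mathbb C^n)^*$ has dual coordinates $p_1,\dots,p_n$. $Y^\perp\subset(\mathbb C^n)^*$ is the annihilator of $Y$. The map $r_a(q,p)=(q_1+a_1/p_1,\dots,q_n+a_n/p_n,p_1,\dots,p_n)$ is defined where all $p_j\ne0$, and $L_{Y,a}=r_a(Y\times Y^\perp)\subset\mathbb C^n\times(\mathbb C^n)^*$ (image of the points of $Y\times Y^\perp$ with all $p_j\ne0$); it is the smooth variety in $\mathbb C^n\times\{\prod_jp_j\ne0\}$ given by $\sum_j\alpha_jp_j=0$ ($\alpha\in Y$) and $\sum_j\beta_j(q_j-a_j/p_j)=0$ ($\beta\in Y^\perp$). *)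

(* The field C is modelled as R[i]
   (complex numbers over an arbitrary realType R, i.e. R[i] is C). *)
From HB Require Import structures.
From mathcomp Require Import all_boot all_order all_algebra.
From mathcomp Require Import all_classical all_reals all_analysis.
From mathcomp Require Import complex.
Import Order.TTheory GRing.Theory Num.Theory.
Import numFieldNormedType.Exports.
Set Implicit Arguments. Unset Strict Implicit. Unset Printing Implicit Defensive.
Local Open Scope ring_scope.
Local Open Scope classical_set_scope.

(* C^n as row vectors, with its canonical normed-module structure over C
   (hence its usual topology and complex differentiability). *)
Definition Cn (R : realType) (n : nat) := ('rV[R[i]]_n : normedModType R[i]).

(* the pairing between (C^n)^* (coordinates p) and C^n (coordinates q) *)
Definition pairing (R : realType) (n : nat) (p q : Cn R n) : R[i] :=
  \sum_(j < n) p 0 j * q 0 j.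

(* Y is the row space of the matrix Y; membership in Y *)
Definition inY (R : realType) (n : nat) (Y : 'M[R[i]]_n) (y : Cn R n) : Prop :=
  (y <= Y)%MS.

Definition inYperp (R : realType) (n : nat) (Y : 'M[R[i]]_n) (p : Cn R n) : Prop :=
  forall y : Cn R n, inY Y y -> pairing p y = 0.

Definition r_map (R : realType) (n : nat) (a : Cn R n) (x : Cn R n * Cn R n)
  : Cn R n * Cn R n :=
  ((\row_j (x.1 0 j + a 0 j / x.2 0 j) : Cn R n), x.2).

Definition L_Ya (R : realType) (n : nat) (Y : 'M[R[i]]_n) (a : Cn R n)
  : set (Cn R n * Cn R n) :=
  [set x | exists q p : Cn R n,
      [/\ inY Y q, inYperp Y p, (forall j, p 0 j != 0) & x = r_map a (q, p)]].

(* The linear functions q_I form a coordinate system on the linear subspace Y: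
   y |-> (y_i)_{i in I} is a bijection from Y onto C^I
   (a value in C^I is represented by a row vector, coordinates outside I ignored). *)
Definition lin_coord_system (R : realType) (n : nat) (Y : 'M[R[i]]_n)
  (I : {set 'I_n}) : Prop :=
  (forall y1 y2 : Cn R n, inY Y y1 -> inY Y y2 ->
     (forall i, i \in I -> y1 0 i = y2 0 i) -> y1 = y2) /\
  (forall c : Cn R n, exists y : Cn R n, inY Y y /\ (forall i, i \in I -> y 0 i = c 0 i)).

Definition qI_pIbar (R : realType) (n : nat) (I : {set 'I_n})
  (x : Cn R n * Cn R n) : Cn R n :=
  \row_j (if j \in I then x.1 0 j else x.2 0 j).

(* n (holomorphic, here polynomial) functions phi form a (global) coordinate
   system on the n-dimensional complex submanifold S of C^n x (C^n)^*:
   phi restricts to a biholomorphism from S onto an open subset U of C^n,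
   i.e. phi is a bijection S -> U whose inverse is holomorphic on U. *)
Definition coord_system (R : realType) (n : nat) (S : set (Cn R n * Cn R n))
  (phi : Cn R n * Cn R n -> Cn R n) : Prop :=
  exists (U : set (Cn R n)) (psi1 psi2 : Cn R n -> Cn R n),
    [/\ open U,
        (forall x, S x -> U (phi x) /\ (psi1 (phi x), psi2 (phi x)) = x),
        (forall u, U u -> S (psi1 u, psi2 u) /\ phi (psi1 u, psi2 u) = u)
      & (forall u, U u -> differentiable psi1 u /\ differentiable psi2 u)].

(* Since q_I is a coordinate system on Y, Y has the basis (e_i)_{i in I}
   dual to q_I, so y = sum_{i in I} y_i e_i on Y, and p lies in Y^perp iff
   p_i = - sum_{l notin I} p_l (e_i)_l for every i in I: on Y^perp the
   coordinates p_I are linear functions of p_Ibar.  Hence a point of L_{Y,a}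
   is recovered from u = (q_I, p_Ibar) as p = P(u), q = sum_{i in I}
   (u_i - a_i / P(u)_i) e_i and the point r_a(q, p); this inverse is rational
   with poles only where some P(u)_j vanishes, so it is holomorphic on the
   open set where all P(u)_j are nonzero. *)

From HB Require Import structures.
From mathcomp Require Import all_boot all_order all_algebra.
From mathcomp Require Import all_classical all_reals all_analysis.
From mathcomp Require Import complex.
Import Order.TTheory GRing.Theory Num.Theory.
Import numFieldNormedType.Exports.
Local Open Scope ring_scope.
Local Open Scope classical_set_scope.

Section Differentiability.
Variables (K : numFieldType) (V : normedModType K).

Lemma open_neq0 : open [set z : K^o | z != 0].
Proof.
have -> : [set z : K^o | z != 0] = ~` [set 0].
  by apply/seteqP; split => z /=; [move/eqP | move=> /eqP].
rewrite openC; apply/accessible_closed_set1/hausdorff_accessible.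
exact: norm_hausdorff.
Qed.

Lemma differentiable_row m (g : V -> 'rV[K]_m) x :
  (forall j, differentiable (fun u => g u 0 j : K^o) x) -> differentiable g x.
Proof.
move=> dg; have -> : g = \sum_(j < m) (fun u => g u 0 j *: delta_mx 0 j).
  by rewrite fct_sumE; apply/funext => u; exact: row_sum_delta.
by apply: differentiable_sum => j; exact: differentiableZl.
Qed.

Lemma differentiable_bigsum m (P : pred 'I_m) (F : 'I_m -> V -> K^o) x :
  (forall i, differentiable (F i) x) ->
  differentiable (fun u => \sum_(i < m | P i) F i u) x.
Proof.
move=> dF; rewrite -fct_sumE; elim/big_ind: _ => // f g.
exact: differentiableD.
Qed.

Lemma differentiable_bigprod m (F : 'I_m -> V -> K^o) x :
  (forall i, differentiable (F i) x) ->
  differentiable (fun u => \prod_(i < m) F i u) x.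
Proof.
move=> dF; rewrite -fct_prodE; elim/big_ind: _ => // f g.
exact: differentiableM.
Qed.

End Differentiability.

Section InverseChart.
Variables (R : realType) (n : nat) (I : {set 'I_n}) (e : 'I_n -> Cn R n).

Definition p_of_coords (u : Cn R n) : Cn R n :=
  \row_j (if j \in I then - \sum_(l < n | l \notin I) u 0 l * e j 0 l else u 0 j).

Definition q_of_coords (a u : Cn R n) : Cn R n :=
  \sum_(i in I) (u 0 i - a 0 i / p_of_coords u 0 i) *: e i.

Lemma p_of_coords_out (u : Cn R n) j : j \notin I -> p_of_coords u 0 j = u 0 j.
Proof. by move=> jI; rewrite mxE (negbTE jI). Qed.

Lemma differentiable_p_of_coords_coord j (u : Cn R n) :
  differentiable (fun v : Cn R n => p_of_coords v 0 j : R[i]^o) u.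
Proof.
have -> : (fun v : Cn R n => p_of_coords v 0 j : R[i]^o) = fun v =>
    if j \in I then - \sum_(l < n | l \notin I) v 0 l * e j 0 l else v 0 j.
  by apply/funext => v; rewrite mxE.
case: (j \in I); last exact: differentiable_coord.
apply/differentiableN/differentiable_bigsum => l.
exact/differentiableM/differentiable_cst/differentiable_coord.
Qed.

Lemma open_p_of_coords_neq0 : open [set u | forall j, p_of_coords u 0 j != 0].
Proof.
have -> : [set u | forall j, p_of_coords u 0 j != 0] =
    (fun u => \prod_(j < n) p_of_coords u 0 j : R[i]^o) @^-1` [set z | z != 0].
  apply/seteqP; split => u /=; first by move=> pu; apply/prodf_neq0 => j _.
  by move/prodf_neq0 => pu j; exact: pu.
apply: open_comp; last exact: open_neq0.
move=> u _; apply/differentiable_continuous/differentiable_bigprod => j.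
exact: differentiable_p_of_coords_coord.
Qed.

Lemma differentiable_q_of_coords (a u : Cn R n) :
  (forall j, p_of_coords u 0 j != 0) ->
  differentiable (fun v => (r_map a (q_of_coords a v, p_of_coords v)).1) u.
Proof.
move=> pu_neq0; apply: differentiable_row => j.
have dinv i : differentiable (fun v => a 0 i / p_of_coords v 0 i : R[i]^o) u.
  apply: differentiableM; first exact: differentiable_cst.
  exact: differentiableV (differentiable_p_of_coords_coord i u) (pu_neq0 i).
have -> : (fun v => (r_map a (q_of_coords a v, p_of_coords v)).1 0 j) = fun v =>
    \sum_(i < n | i \in I) (v 0 i - a 0 i / p_of_coords v 0 i) * e i 0 j
    + a 0 j / p_of_coords v 0 j.
  by apply/funext => v; rewrite mxE summxE; under eq_bigr => i _ do rewrite mxE.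
apply: differentiableD (dinv j).
apply: differentiable_bigsum => i; apply/differentiableM/differentiable_cst.
exact/differentiableB/dinv/differentiable_coord.
Qed.

Hypothesis e_coord : forall i j, j \in I -> e i 0 j = (j == i)%:R.

Lemma coord_sum_basis (c : 'I_n -> R[i]) j : j \in I ->
  (\sum_(i in I) c i *: e i) 0 j = c j.
Proof.
move=> jI; rewrite summxE (bigD1 j) //= mxE e_coord // eqxx mulr1 big1 ?addr0 //.
by move=> i /andP[_ ij]; rewrite mxE e_coord // eq_sym (negbTE ij) mulr0.
Qed.

Lemma pairing_sum_basis (p : Cn R n) (c : 'I_n -> R[i]) :
  pairing p (\sum_(i in I) c i *: e i) = \sum_(i in I) c i * pairing p (e i).
Proof.
rewrite /pairing; under eq_bigr => j _ do rewrite summxE big_distrr /=.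
rewrite exchange_big /=; apply: eq_bigr => i _.
by rewrite big_distrr /=; apply: eq_bigr => j _; rewrite mxE mulrCA.
Qed.

Lemma pairing_basis (p : Cn R n) i : i \in I ->
  pairing p (e i) = p 0 i - p_of_coords p 0 i.
Proof.
move=> iI; rewrite /pairing (bigID (mem I)) /= mxE iI opprK; congr (_ + _).
rewrite (bigD1 i) //= e_coord // eqxx mulr1 big1 ?addr0 //.
by move=> l /andP[lI li]; rewrite e_coord // (negbTE li) mulr0.
Qed.

Lemma eq_p_of_coords (u v : Cn R n) :
  (forall j, j \notin I -> u 0 j = v 0 j) ->
  p_of_coords u = p_of_coords v.
Proof.
move=> uv; apply/rowP => j; rewrite !mxE; case: ifP => [_|/negbT /uv //].
by congr (- _); apply: eq_bigr => l /uv ->.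
Qed.

Lemma p_of_coordsK (u : Cn R n) : p_of_coords (p_of_coords u) = p_of_coords u.
Proof. by apply: eq_p_of_coords => j /p_of_coords_out. Qed.

Lemma coords_of_chart (a u : Cn R n) :
  qI_pIbar I (r_map a (q_of_coords a u, p_of_coords u)) = u.
Proof.
apply/rowP => j; rewrite mxE; case: ifP => jI; last exact/p_of_coords_out/negbT.
by rewrite /= mxE coord_sum_basis // subrK.
Qed.

Variable Y : 'M[R[i]]_n.
Hypothesis e_in_Y : forall i, inY Y (e i).
Hypothesis coord_inj : forall y1 y2 : Cn R n, inY Y y1 -> inY Y y2 ->
  (forall i, i \in I -> y1 0 i = y2 0 i) -> y1 = y2.

Lemma inY_sum_basis (c : 'I_n -> R[i]) : inY Y (\sum_(i in I) c i *: e i).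
Proof. by apply: summx_sub => i _; apply/scalemx_sub/e_in_Y. Qed.

Lemma inY_expand (y : Cn R n) : inY Y y -> y = \sum_(i in I) y 0 i *: e i.
Proof.
move=> yY; apply: coord_inj (inY_sum_basis _) _ => // j jI.
by rewrite coord_sum_basis.
Qed.

Lemma inYperp_p_of_coords (u : Cn R n) : inYperp Y (p_of_coords u).
Proof.
move=> y /inY_expand ->; rewrite pairing_sum_basis big1 // => i iI.
by rewrite pairing_basis // p_of_coordsK subrr mulr0.
Qed.

Lemma p_of_coords_id (p : Cn R n) : inYperp Y p -> p_of_coords p = p.
Proof.
move=> pY; apply/rowP => j.
case: (boolP (j \in I)) => jI; last exact: p_of_coords_out.
by apply/esym/eqP; rewrite -subr_eq0 -pairing_basis //; apply/eqP/pY.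
Qed.

Lemma p_of_coords_qI_pIbar (a q p : Cn R n) : inYperp Y p ->
  p_of_coords (qI_pIbar I (r_map a (q, p))) = p.
Proof.
move=> pY; rewrite -[RHS]p_of_coords_id //; apply: eq_p_of_coords => j jI.
by rewrite mxE (negbTE jI).
Qed.

Lemma q_of_coords_qI_pIbar (a q p : Cn R n) : inY Y q -> inYperp Y p ->
  q_of_coords a (qI_pIbar I (r_map a (q, p))) = q.
Proof.
move=> qY pY; rewrite [RHS]inY_expand // /q_of_coords p_of_coords_qI_pIbar //.
by apply: eq_bigr => i iI; rewrite !mxE iI addrK.
Qed.

Lemma coord_system_L_Ya (a : Cn R n) : coord_system (L_Ya Y a) (qI_pIbar I).
Proof.
exists [set u | forall j, p_of_coords u 0 j != 0],
  (fun u => (r_map a (q_of_coords a u, p_of_coords u)).1), p_of_coords; split.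
- exact: open_p_of_coords_neq0.
- move=> _ [q [p [qY pY p_neq0 ->]]].
  by rewrite /= q_of_coords_qI_pIbar // p_of_coords_qI_pIbar.
- move=> u u_neq0; split; last exact: coords_of_chart.
  exists (q_of_coords a u), (p_of_coords u); split => //.
  + exact: inY_sum_basis.
  + exact: inYperp_p_of_coords.
- move=> u u_neq0; split; first exact: differentiable_q_of_coords.
  by apply: differentiable_row => j; exact: differentiable_p_of_coords_coord.
Qed.

End InverseChart.

Lemma lin_coord_system_basis {R : realType} {n : nat} {Y : 'M[R[i]]_n}
    {I : {set 'I_n}} : lin_coord_system Y I ->
  exists e : 'I_n -> Cn R n,
    (forall i, inY Y (e i)) /\ (forall i j, j \in I -> e i 0 j = (j == i)%:R).
Proof.
move=> [_ onto]; have [f fP] := choice onto.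
exists (fun i => f (delta_mx 0 i)); split => [i | i j jI]; first exact: (fP _).1.
by rewrite (fP _).2 // mxE eqxx.
Qed.

Theorem lemma4p2 (R : realType) (n k : nat) (Y : 'M[R[i]]_n) (a : Cn R n)
  (I : {set 'I_n}) :
  \rank Y = k ->
  (forall j : 'I_n, a 0 j != 0) ->
  (forall j : 'I_n, exists y : Cn R n, inY Y y /\ y 0 j != 0) ->
  (forall j : 'I_n, exists p : Cn R n, inYperp Y p /\ p 0 j != 0) ->
  #|I| = k ->
  lin_coord_system Y I ->
  coord_system (L_Ya Y a) (qI_pIbar I).
Proof.
move=> _ _ _ _ _ qI_coords.
have [e [e_in_Y e_coord]] := lin_coord_system_basis qI_coords.
exact: @coord_system_L_Ya _ _ _ _ e_coord _ e_in_Y qI_coords.1 a.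
Qed.
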